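(* Consider a complex-balanced mass action chemical reaction network $\Sigma$: $\dot x=-Z\mathcal{L}(x^* )\,\mathrm{Exp}(Z^T\mathrm{Ln}(x/x^* ))$ with complex-equilibrium $x^*\in\mathbb{R}_+^m$. Let $\mathcal{V}_r$ be a set of complexes to be deleted; order the complexes so that those in $\mathcal{V}_r$ come last, partition \[ \mathcal{L}(x^* )=\begin{bmatrix}\mathcal{L}_{11}&\mathcal{L}_{12}\\ \mathcal{L}_{21}&\mathcal{L}_{22}\end{bmatrix},\qquad Z=\begin{bmatrix}Z_1 & Z_2\end{bmatrix} \] accordingly (the second blocks corresponding to $\mathcal{V}_r$), assume $\mathcal{L}_{22}$ is invertible, and let $\hat{\mathcal{L}}(x^* )=\mathcal{L}_{11}-\mathcal{L}_{12}\mathcal{L}_{22}^{-1}\mathcal{L}_{21}$ and $\hat Z=Z_1$. Define the reduced network $\hat\Sigma$: $\dot x=-\hat Z\hat{\mathcal{L}}(x^* )\,\mathrm{Exp}(\hat Z^T\mathrm{Ln}(x/x^* ))$. Let $\mathcal{E}$ and $\hat{\mathcal{E}}$ be the sets of equilibria in $\mathbb{R}_+^m$ of $\Sigma$ and $\hat\Sigma$ respectively. Then $\mathcal{E}\subseteq\hat{\mathcal{E}}$.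
   Context: A mass action chemical reaction network has $m$ species with concentration vector $x\in\mathbb{R}_+^m$ (strictly positive entries), $c$ complexes and $r$ reactions. The complex-stoichiometric matrix $Z\in\mathbb{R}^{m\times c}$ has nonnegative integer entries; its $\alpha$-th column $Z_\alpha$ gives the composition of complex $\alpha$. The graph of complexes has the complexes as vertices and a directed edge for each reaction $j$ from its substrate complex $\mathcal{S}_j$ to its product complex $\mathcal{P}_j$; its incidence matrix $B\in\mathbb{R}^{c\times r}$ has $(\alpha,j)$ entry $-1$ if $\alpha=\mathcal{S}_j$, $+1$ if $\alpha=\mathcal{P}_j$, $0$ otherwise. Reaction $j$ has rate constant $k_j>0$ and rate $v_j(x)=k_j\exp(Z_{\mathcal{S}_j}^T\mathrm{Ln}(x))$. $\mathrm{Ln}$ and $\mathrm{Exp}$ are componentwise logarithm and exponential, $x/x^*$ is componentwise division. With $a_{\pi\sigma}=\sum\{k_j:\mathcal{S}_j=\sigma,\mathcal{P}_j=\pi\}$, $A=(a_{\pi\sigma})$, $\Delta$ diagonal with entries the column sums of $A$, $L=\Delta-A$, the mass action dynamics $\dot x=ZBv(x)$ equal $\dot x=-ZL\,\mathrm{Exp}(Z^T\mathrm{Ln}(x))$. A complex-equilibrium is $x^*\in\mathbb{R}_+^m$ with $Bv(x^* )=0$; the network is complex-balanced if one exists. The weighted Laplacian is $\mathcal{L}(x^* )=L\,\mathrm{diag}_{i=1}^c(\exp(Z_i^T\mathrm{Ln}(x^* )))$; it has zero row and column sums, and with it the dynamics $\dot x=ZBv(x)$ take the form $\dot x=-Z\mathcal{L}(x^*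 )\mathrm{Exp}(Z^T\mathrm{Ln}(x/x^* ))$. An equilibrium of a system $\dot x=f(x)$ is a point $x\in\mathbb{R}_+^m$ with $f(x)=0$. *)

From HB Require Import structures.
From mathcomp Require Import all_boot all_order all_algebra.
From mathcomp Require Import all_classical all_reals all_analysis.
Set Implicit Arguments. Unset Strict Implicit. Unset Printing Implicit Defensive.
Import Order.TTheory GRing.Theory Num.Theory.
Local Open Scope ring_scope.

Section CRN.
Variable R : realType.

Definition Ln (n : nat) (x : 'cV[R]_n) : 'cV[R]_n := map_mx (@ln R) x.
Definition Exp (n : nat) (x : 'cV[R]_n) : 'cV[R]_n := map_mx (@expR R) x.

Definition cdiv (n : nat) (x y : 'cV[R]_n) : 'cV[R]_n := \col_i (x i 0 / y i 0).

Definition positive (n : nat) (x : 'cV[R]_n) : Prop := forall i, 0 < x i 0.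

(* A mass action network: m species, c complexes, r reactions;
   Z : complex-stoichiometric matrix, S j / P j : substrate / product complex
   of reaction j, k j : rate constant of reaction j. *)

Definition rateA (c r : nat) (S P : 'I_r -> 'I_c) (k : 'I_r -> R) : 'M[R]_c :=
  \matrix_(p, s) \sum_(j | (S j == s) && (P j == p)) k j.

Definition rateDelta (c r : nat) (S P : 'I_r -> 'I_c) (k : 'I_r -> R) : 'M[R]_c :=
  \matrix_(p, s) ((p == s)%:R * \sum_q rateA S P k q s).

Definition lapL (c r : nat) (S P : 'I_r -> 'I_c) (k : 'I_r -> R) : 'M[R]_c :=
  rateDelta S P k - rateA S P k.

Definition incB (c r : nat) (S P : 'I_r -> 'I_c) : 'M[R]_(c, r) :=
  \matrix_(a, j) ((a == P j)%:R - (a == S j)%:R).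

Definition rates (m c r : nat) (Z : 'M[R]_(m, c)) (S : 'I_r -> 'I_c)
  (k : 'I_r -> R) (x : 'cV[R]_m) : 'cV[R]_r :=
  \col_j (k j * expR (((col (S j) Z)^T *m Ln x) 0 0)).

Definition complex_equilibrium (m c r : nat) (Z : 'M[R]_(m, c))
  (S P : 'I_r -> 'I_c) (k : 'I_r -> R) (xs : 'cV[R]_m) : Prop :=
  positive xs /\ incB S P *m rates Z S k xs = 0.

Definition weightedL (m c r : nat) (Z : 'M[R]_(m, c))
  (S P : 'I_r -> 'I_c) (k : 'I_r -> R) (xs : 'cV[R]_m) : 'M[R]_c :=
  lapL S P k *m diag_mx (Exp (Z^T *m Ln xs))^T.

Definition crn_field (m c : nat) (Z : 'M[R]_(m, c)) (Lw : 'M[R]_c)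
  (xs x : 'cV[R]_m) : 'cV[R]_m :=
  - (Z *m Lw *m Exp (Z^T *m Ln (cdiv x xs))).

Definition is_equilibrium (m : nat) (f : 'cV[R]_m -> 'cV[R]_m) (x : 'cV[R]_m) : Prop :=
  positive x /\ f x = 0.

Definition kron_reduce (c1 c2 : nat) (Lw : 'M[R]_(c1 + c2)) : 'M[R]_c1 :=
  ulsubmx Lw - ursubmx Lw *m invmx (drsubmx Lw) *m dlsubmx Lw.

End CRN.

(* At an equilibrium x of the full network, g := Z^T Ln(x/xs) satisfies
   g^T Lw Exp g = 0.  The weighted Laplacian has nonpositive off-diagonal
   entries and, because xs is a complex-equilibrium, zero row and column sums;
   hence g^T Lw Exp g is a nonnegative combination of Bregman divergences of
   exp between the entries of g.  All of them vanish, so g is constant along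
   every edge and Lw Exp g = 0.  Kron reduction preserves this kernel
   relation on the retained complexes, and Exp(Z_1^T Ln(x/xs)) is the upper
   block of Exp g, so x is also an equilibrium of the reduced network. *)
From HB Require Import structures.
From mathcomp Require Import all_boot all_order all_algebra.
From mathcomp Require Import all_classical all_reals all_analysis.
From mathcomp Require Import ring lra.
Set Implicit Arguments. Unset Strict Implicit. Unset Printing Implicit Defensive.
Import Order.TTheory GRing.Theory Num.Theory.
Local Open Scope ring_scope.

Section ExpBregman.
Variable R : realType.

Definition expR_bregman (a b : R) : R := expR b - expR a - expR a * (b - a).

Lemma expR_bregmanE (a b : R) :
  expR_bregman a b = expR a * (expR (b - a) - 1 - (b - a)).
Proof.
rewrite /expR_bregman.
have -> : expR b = expR (b - a) * expR a by rewrite -expRD subrK.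
ring.
Qed.

Lemma expR_bregman_ge0 (a b : R) : 0 <= expR_bregman a b.
Proof.
rewrite expR_bregmanE mulr_ge0 ?expR_ge0 //.
by have := expR_ge1Dx (b - a); lra.
Qed.

Lemma expR_bregman_eq0 (a b : R) : expR_bregman a b = 0 -> a = b.
Proof.
rewrite expR_bregmanE => /eqP; rewrite mulf_eq0 gt_eqF ?expR_gt0 //= => /eqP.
have [/eqP|ne] := eqVneq (b - a) 0; first by rewrite subr_eq0 => /eqP ->.
by have := expR_gt1Dx ne; lra.
Qed.

End ExpBregman.

Section LaplacianExpKernel.
Variables (R : realType) (n : nat) (M : 'M[R]_n).
Hypothesis M_offdiag_le0 : forall i j, i != j -> M i j <= 0.
Hypothesis M_col_sum0 : forall j, \sum_i M i j = 0.
Hypothesis M_row_sum0 : forall i, \sum_j M i j = 0.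

(* The row and column sum conditions turn g^T M Exp g into the sum of
   -M_ij D(g_j, g_i), with D the Bregman divergence of exp. *)
Lemma quad_expR_bregman (g : 'cV[R]_n) :
  (g^T *m (M *m Exp g)) 0 0
  = \sum_i \sum_j - M i j * expR_bregman (g j 0) (g i 0).
Proof.
have expand i j : - M i j * expR_bregman (g j 0) (g i 0)
    = g i 0 * (M i j * expR (g j 0))
      + M i j * (expR (g j 0) - expR (g j 0) * g j 0) - M i j * expR (g i 0).
  by rewrite /expR_bregman; ring.
transitivity (\sum_i \sum_j g i 0 * (M i j * expR (g j 0))
    + \sum_i \sum_j M i j * (expR (g j 0) - expR (g j 0) * g j 0)
    - \sum_i \sum_j M i j * expR (g i 0)); last first.
  rewrite -big_split -sumrB; apply: eq_bigr => i _.
  by rewrite -big_split -sumrB; apply: eq_bigr => j _; rewrite expand.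
rewrite [X in _ + X - _]exchange_big [X in _ + X - _]big1 => [|j _]; last first.
  by rewrite -mulr_suml M_col_sum0 mul0r.
rewrite [X in _ - X]big1 => [|i _]; last by rewrite -mulr_suml M_row_sum0 mul0r.
rewrite addr0 subr0 mxE; apply: eq_bigr => i _; rewrite !mxE mulr_sumr.
by apply: eq_bigr => j _; rewrite /Exp !mxE.
Qed.

Lemma laplacian_mul_Exp_eq0 (g : 'cV[R]_n) :
  g^T *m (M *m Exp g) = 0 -> M *m Exp g = 0.
Proof.
move=> /matrixP /(_ 0 0); rewrite quad_expR_bregman mxE => sum_eq0.
have term_ge0 i j : 0 <= - M i j * expR_bregman (g j 0) (g i 0).
  have [->|ne] := eqVneq i j; first by rewrite /expR_bregman !(subrr, mulr0).
  by rewrite mulr_ge0 ?expR_bregman_ge0 // oppr_ge0 M_offdiag_le0.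
have edge_const i j : M i j != 0 -> g j 0 = g i 0.
  move=> Mij_neq0; apply: expR_bregman_eq0; apply/eqP.
  have row_ge0 i' : 0 <= \sum_j - M i' j * expR_bregman (g j 0) (g i' 0).
    by apply: sumr_ge0 => j' _; apply: term_ge0.
  have row_eq0 := psumr_eq0P (fun i' _ => row_ge0 i') sum_eq0.
  have /eqP := psumr_eq0P (fun j' _ => term_ge0 i j') (row_eq0 i isT) (i := j) isT.
  by rewrite mulf_eq0 oppr_eq0 (negbTE Mij_neq0).
apply/matrixP => i z; rewrite (ord1 z) !mxE.
transitivity (\sum_j M i j * (expR (g j 0) - expR (g i 0))).
  rewrite (eq_bigr _ (fun j _ => mulrBr _ _ _)) sumrB -mulr_suml M_row_sum0.
  by rewrite mul0r subr0; apply: eq_bigr => j _; rewrite mxE.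
apply: big1 => j _; have [->|/edge_const ->] := eqVneq (M i j) 0.
  by rewrite mul0r.
by rewrite subrr mulr0.
Qed.

End LaplacianExpKernel.

Lemma kron_reduce_mul_usub (R : realType) (c1 c2 : nat) (L : 'M[R]_(c1 + c2))
    (v : 'cV[R]_(c1 + c2)) :
  drsubmx L \in unitmx -> L *m v = 0 -> kron_reduce L *m usubmx v = 0.
Proof.
move=> L22_unit Lv0.
rewrite -[v]vsubmxK -[L]submxK mul_block_col in Lv0.
move/eqP: Lv0; rewrite col_mx_eq0 => /andP[/eqP top /eqP bot].
have dl_u : dlsubmx L *m usubmx v = - (drsubmx L *m dsubmx v).
  by apply/eqP; rewrite -addr_eq0 bot.
rewrite /kron_reduce mulmxBl -!mulmxA dl_u mulmxN mulKmx // mulmxN opprK.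
by rewrite top.
Qed.

Section MassAction.
Variables (R : realType) (c r : nat) (S P : 'I_r -> 'I_c) (k : 'I_r -> R).

Lemma lapLE i j :
  lapL S P k i j = (i == j)%:R * \sum_q rateA S P k q j - rateA S P k i j.
Proof. by rewrite !mxE. Qed.

Lemma lapL_offdiag_le0 i j :
  (forall l, 0 <= k l) -> i != j -> lapL S P k i j <= 0.
Proof.
move=> k_ge0 ij; rewrite lapLE (negbTE ij) mul0r sub0r oppr_le0 mxE.
exact: sumr_ge0.
Qed.

Lemma lapL_col_sum0 j : \sum_i lapL S P k i j = 0.
Proof.
under eq_bigr do rewrite lapLE.
rewrite sumrB (bigD1 j) //= eqxx mul1r [X in _ + X - _]big1 ?addr0 ?subrr // => i.
by move/negbTE ->; rewrite mul0r.
Qed.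

Lemma sum_rateA_col s :
  \sum_q rateA S P k q s = \sum_(l | S l == s) k l.
Proof.
under eq_bigr do rewrite mxE.
rewrite (exchange_big_dep (fun l => S l == s)) => [|q l _ /andP[]//].
by apply: eq_bigr => l Sl; rewrite (big_pred1 (P l)) // => q; rewrite /= Sl eq_sym.
Qed.

Lemma sum_rateA_row (w : 'I_c -> R) p :
  \sum_s rateA S P k p s * w s = \sum_(l | P l == p) k l * w (S l).
Proof.
under eq_bigr do rewrite mxE mulr_suml.
rewrite (exchange_big_dep (fun l => P l == p)) => [|s l _ /andP[]//].
by apply: eq_bigr => l Pl; rewrite (big_pred1 (S l)) // => s; rewrite /= Pl andbT eq_sym.
Qed.

Lemma lapL_mul (w : 'cV[R]_c) :
  lapL S P k *m w = - (incB R S P *m \col_l (k l * w (S l) 0)).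
Proof.
apply/matrixP => i z; rewrite (ord1 z) !mxE.
under eq_bigr do rewrite lapLE mulrBl.
rewrite sumrB (bigD1 i) //= eqxx mul1r [X in _ + X - _]big1 => [|j ji]; last first.
  by rewrite eq_sym (negbTE ji) !mul0r.
rewrite addr0 sum_rateA_col mulr_suml (sum_rateA_row (fun s => w s 0)).
under [in RHS]eq_bigr do rewrite !mxE mulrBl.
rewrite sumrB opprB (big_mkcond (fun l => S l == i)) (big_mkcond (fun l => P l == i)).
by congr (_ - _); apply: eq_bigr => l _; rewrite eq_sym;
  case: eqP => [e|_]; rewrite ?e ?mul1r ?mul0r.
Qed.

Lemma incB_mul_rates (m : nat) (Z : 'M[R]_(m, c)) (x : 'cV[R]_m) :
  incB R S P *m rates Z S k x = - (lapL S P k *m Exp (Z^T *m Ln x)).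
Proof.
rewrite lapL_mul opprK; congr (_ *m _); apply/colP => l; rewrite !mxE.
congr (_ * expR _).
by apply: eq_bigr => j _; rewrite !mxE.
Qed.

Section WeightedLaplacian.
Variables (m : nat) (Z : 'M[R]_(m, c)) (xs : 'cV[R]_m).

Lemma weightedLE i j :
  weightedL Z S P k xs i j = lapL S P k i j * expR ((Z^T *m Ln xs) j 0).
Proof. by rewrite /weightedL mul_mx_diag !mxE. Qed.

Lemma weightedL_offdiag_le0 i j :
  (forall l, 0 <= k l) -> i != j -> weightedL Z S P k xs i j <= 0.
Proof.
by move=> k_ge0 ij; rewrite weightedLE mulr_le0_ge0 ?expR_ge0 ?lapL_offdiag_le0.
Qed.

Lemma weightedL_col_sum0 j : \sum_i weightedL Z S P k xs i j = 0.
Proof.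
by under eq_bigr do rewrite weightedLE; rewrite -mulr_suml lapL_col_sum0 mul0r.
Qed.

Lemma weightedL_row_sum0 i :
  incB R S P *m rates Z S k xs = 0 -> \sum_j weightedL Z S P k xs i j = 0.
Proof.
rewrite incB_mul_rates => /eqP; rewrite oppr_eq0 => /eqP /matrixP /(_ i 0).
rewrite !mxE => Lw_eq0; rewrite -[RHS]Lw_eq0.
by apply: eq_bigr => j _; rewrite weightedLE /Exp !mxE.
Qed.

End WeightedLaplacian.
End MassAction.

Theorem proposition3 (R : realType) (m c1 c2 r : nat)
  (Z : 'M[R]_(m, c1 + c2))
  (S P : 'I_r -> 'I_(c1 + c2)) (k : 'I_r -> R) (xs : 'cV[R]_m) :
  (forall i j, exists n : nat, Z i j = n%:R) ->
  (forall j, S j != P j) ->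
  (forall j, 0 < k j) ->
  complex_equilibrium Z S P k xs ->
  drsubmx (weightedL Z S P k xs) \in unitmx ->
  forall x : 'cV[R]_m,
    is_equilibrium (crn_field Z (weightedL Z S P k xs) xs) x ->
    is_equilibrium (crn_field (lsubmx Z) (kron_reduce (weightedL Z S P k xs)) xs) x.
Proof.
move=> _ _ k_gt0 [_ complex_bal] L22_unit x [x_pos field_eq0]; split => //.
set Lw := weightedL Z S P k xs in field_eq0 L22_unit *.
set g := Z^T *m Ln (cdiv x xs).
have quad_eq0 : g^T *m (Lw *m Exp g) = 0.
  move/eqP: field_eq0; rewrite /crn_field oppr_eq0 -/g -mulmxA => /eqP ZLe0.
  by rewrite /g trmx_mul trmxK -mulmxA ZLe0 mulmx0.
have Lw_ker : Lw *m Exp g = 0.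
  apply: laplacian_mul_Exp_eq0 quad_eq0.
  - by move=> i j; apply: weightedL_offdiag_le0 => l; apply: ltW.
  - exact: weightedL_col_sum0.
  - by move=> i; apply: weightedL_row_sum0.
rewrite /crn_field trmx_lsub mul_usub_mx /Exp map_usubmx -/(Exp g) -mulmxA.
by rewrite kron_reduce_mul_usub // mulmx0 oppr0.
Qed.
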